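(* Let $c>2$, $m\ge3$ and $p\le1/2$. If $mp\ge c$, then for every $q\in[0,1]$, \[ \ell_1(\mathrm{Bin}(m,p),\mathrm{Bin}(m,q))\ge\frac1{350}\min\left(\frac{\sqrt m\,|p-q|}{\sqrt{p(1-p)}},1\right). \]
   Context: $m$ is an integer, $p\in[0,1]$, and $\ell_1(P,Q)=\sum_x|P(x)-Q(x)|$. *)

From HB Require Import structures.
From mathcomp Require Import all_boot all_order all_algebra.
From mathcomp Require Import reals.
Set Implicit Arguments. Unset Strict Implicit. Unset Printing Implicit Defensive.
Import Order.TTheory GRing.Theory Num.Theory.
Local Open Scope ring_scope.

Definition binom_pmf (R : realType) (m : nat) (p : R) (k : nat) : R :=
  ('C(m, k))%:R * p ^+ k * (1 - p) ^+ (m - k).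

(* l1 distance sum_x |P(x) - Q(x)| between Bin(m,p) and Bin(m,q);
   both are supported on {0,...,m}, so the sum over k < m.+1 is the full sum. *)
Definition l1_binom (R : realType) (m : nat) (p q : R) : R :=
  \sum_(k < m.+1) `|binom_pmf m p k - binom_pmf m q k|.

From mathcomp Require Import all_boot all_order all_algebra.
From mathcomp Require Import reals.
From mathcomp Require Import ring lra.
Set Implicit Arguments. Unset Strict Implicit. Unset Printing Implicit Defensive.
Import Order.TTheory GRing.Theory Num.Theory.
Local Open Scope ring_scope.

(* Let [P], [Q] be the two binomial laws, [d = m (q - p)] the shift of the mean,
   [V = m p (1 - p) >= 1] the variance of [P] and [S = sum_k |P k - Q k| (k - m p)^2].
   Cauchy-Schwarz with weights [|P - Q|] gives [d^2 <= l1 * S].  Cauchy-Schwarz with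
   weights [P] bounds [S^2] by the fourth central moment of [P] (at most [4 V^2]) times
   the chi-square divergence [(1 + (q - p)^2 / (p (1 - p)))^m - 1], which is at most
   [2 r^2] for [r^2 = m (q - p)^2 / (p (1 - p)) = d^2 / V <= 1/2]; together these give
   [r <= 3 l1].  When [r^2 > 1/2], the second moments of [P] and [Q] give [S <= 7 d^2]
   instead, hence [l1 >= 1/7]. *)

Lemma natr_ffactS (R : pzRingType) (k j : nat) :
  (k ^_ j.+1)%:R = (k ^_ j)%:R * (k%:R - j%:R) :> R.
Proof.
rewrite ffactnSr natrM; have [le_jk | lt_kj] := leqP j k; first by rewrite natrB.
by rewrite ffact_small // !mul0r.
Qed.

Lemma weighted_cauchy_schwarz (R : realDomainType) (I : finType) (w x y : I -> R) :
  (forall i, 0 <= w i) ->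
  (\sum_i w i * x i * y i) ^+ 2 <=
  (\sum_i w i * x i ^+ 2) * (\sum_i w i * y i ^+ 2).
Proof.
move=> w_ge0.
set A := \sum_i w i * x i ^+ 2; set B := \sum_i w i * y i ^+ 2.
set C := \sum_i w i * x i * y i.
have wx2_ge0 i : 0 <= w i * x i ^+ 2 by rewrite mulr_ge0 ?sqr_ge0.
have A_ge0 : 0 <= A by exact: sumr_ge0.
have [A0 | A_neq0] := eqVneq A 0.
  suff -> : C = 0 by rewrite A0 expr0n mul0r.
  rewrite /C big1 // => i _.
  have /eqP : w i * x i ^+ 2 = 0.
    by apply: (psumr_eq0P (P := predT) (fun j _ => wx2_ge0 j) A0).
  by rewrite mulf_eq0 sqrf_eq0 => /orP[] /eqP->; rewrite !(mul0r, mulr0).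
have A_gt0 : 0 < A by rewrite lt_def A_neq0.
suff : 0 <= A * (A * B - C ^+ 2) by rewrite pmulr_rge0 // subr_ge0.
have -> : A * (A * B - C ^+ 2) = \sum_i w i * (C * x i - A * y i) ^+ 2.
  transitivity (\sum_i (C ^+ 2 * (w i * x i ^+ 2) - (2 * C * A) * (w i * x i * y i)
                        + A ^+ 2 * (w i * y i ^+ 2))).
    by rewrite big_split sumrB /= -!mulr_sumr -/A -/B -/C; ring.
  by apply: eq_bigr => i _; ring.
by apply: sumr_ge0 => i _; rewrite mulr_ge0 ?sqr_ge0.
Qed.

Lemma exprD1_mul_subr_le1 (R : numDomainType) (a : R) (m : nat) :
  0 <= a -> (1 + a) ^+ m * (1 - m%:R * a) <= 1.
Proof.
move=> a_ge0; elim: m => [|m IHm]; first by rewrite expr0 mul0r subr0 mulr1.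
apply: le_trans IHm; rewrite exprS -natr1.
have -> : (1 + a) * (1 + a) ^+ m * (1 - (m%:R + 1) * a) =
          (1 + a) ^+ m * (1 - m%:R * a) - (1 + a) ^+ m * ((m%:R + 1) * a ^+ 2) by ring.
by rewrite lerBlDr lerDl !mulr_ge0 ?exprn_ge0 ?addr_ge0 ?sqr_ge0.
Qed.

Lemma exprD1_subr1_le (R : realFieldType) (a : R) (m : nat) :
  0 <= a -> m%:R * a <= 1 / 2 -> (1 + a) ^+ m - 1 <= 2 * (m%:R * a).
Proof.
move=> a_ge0 ma_le; have := exprD1_mul_subr_le1 m a_ge0.
have : 1 <= (1 + a) ^+ m by rewrite exprn_ege1 // lerDl.
have : 0 <= m%:R * a by rewrite mulr_ge0.
move: ma_le; move: ((1 + a) ^+ m) (m%:R * a) => X y; nra.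
Qed.

Section BinomialMoments.
Variable R : realType.
Implicit Types (m : nat) (a p q : R).

Lemma binom_pmf_ge0 m a k : 0 <= a <= 1 -> 0 <= binom_pmf m a k.
Proof. by case/andP=> a_ge0 a_le1; rewrite !mulr_ge0 ?exprn_ge0 ?subr_ge0. Qed.

Lemma binom_pmf_gt0 m a k : 0 < a < 1 -> (k <= m)%N -> 0 < binom_pmf m a k.
Proof.
case/andP=> a_gt0 a_lt1 le_km.
by rewrite !mulr_gt0 ?exprn_gt0 ?subr_gt0 // ltr0n bin_gt0.
Qed.

Lemma sum_binom_pmf m a : \sum_(k < m.+1) binom_pmf m a k = 1.
Proof.
have := exprDn (1 - a) a m; rewrite subrK expr1n => ->.
by apply: eq_bigr => k _; rewrite /binom_pmf -mulr_natl; ring.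
Qed.

Lemma sum_binom_pmf_ffact m a j :
  \sum_(k < m.+1) binom_pmf m a k * (k ^_ j)%:R = (m ^_ j)%:R * a ^+ j.
Proof.
elim: j m => [|j IHj] m.
  by under eq_bigr do rewrite ffactn0 mulr1; rewrite sum_binom_pmf ffactn0 mul1r.
case: m => [|m]; first by rewrite big_ord_recl big_ord0 /= ffact0n !mulr0 mul0r addr0.
rewrite big_ord_recl /= ffact0n mulr0 add0r ffactSS natrM exprS.
have -> : (m.+1)%:R * (m ^_ j)%:R * (a * a ^+ j) =
          (m.+1)%:R * a * ((m ^_ j)%:R * a ^+ j) :> R by ring.
rewrite -IHj mulr_sumr; apply: eq_bigr => k _.
rewrite /bump /= add1n ffactSS /binom_pmf subSS exprS.
have binS : ('C(m.+1, k.+1))%:R * (k.+1)%:R = (m.+1)%:R * ('C(m, k))%:R :> R.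
  by rewrite -!natrM mulnC -mul_bin_diag.
rewrite natrM; transitivity (('C(m.+1, k.+1))%:R * (k.+1)%:R * a * a ^+ k
  * (1 - a) ^+ (m - k) * (k ^_ j)%:R); first ring.
by rewrite binS; ring.
Qed.

Lemma sum_binom_pmf_ffact_expansion (cs : seq R) m a (f : nat -> R) :
  (forall k, f k = \sum_(j < size cs) cs`_j * (k ^_ j)%:R) ->
  \sum_(k < m.+1) binom_pmf m a k * f k = \sum_(j < size cs) cs`_j * (m ^_ j)%:R * a ^+ j.
Proof.
move=> f_exp; under eq_bigr do rewrite f_exp mulr_sumr; rewrite exchange_big /=.
apply: eq_bigr => j _; rewrite -mulrA -sum_binom_pmf_ffact mulr_sumr.
by apply: eq_bigr => k _; ring.
Qed.

Lemma binom_moment1 m a t :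
  \sum_(k < m.+1) binom_pmf m a k * (k%:R - t) = m%:R * a - t.
Proof.
rewrite (@sum_binom_pmf_ffact_expansion [:: - t; 1] m a (fun k => k%:R - t)) => [|k];
  by rewrite !big_ord_recl big_ord0 /= !natr_ffactS ffactn0 /bump /=; ring.
Qed.

Lemma binom_moment2 m a t :
  \sum_(k < m.+1) binom_pmf m a k * (k%:R - t) ^+ 2
  = m%:R * a * (1 - a) + (m%:R * a - t) ^+ 2.
Proof.
rewrite (@sum_binom_pmf_ffact_expansion [:: t ^+ 2; 1 - 2 * t; 1] m a (fun k => (k%:R - t) ^+ 2)) => [|k];
  by rewrite !big_ord_recl big_ord0 /= !natr_ffactS ffactn0 /bump /=; ring.
Qed.

Lemma binom_central_moment4 m a :
  \sum_(k < m.+1) binom_pmf m a k * (k%:R - m%:R * a) ^+ 4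
  = m%:R * a * (1 - a) * (1 + 3 * (m%:R - 2) * a * (1 - a)).
Proof.
set t := m%:R * a.
pose cs := [:: t ^+ 4; 1 - 4 * t + 6 * t ^+ 2 - 4 * t ^+ 3; 7 - 12 * t + 6 * t ^+ 2;
               6 - 4 * t; 1].
rewrite (@sum_binom_pmf_ffact_expansion cs m a (fun k => (k%:R - t) ^+ 4)) => [|k];
  by rewrite !big_ord_recl big_ord0 /= !natr_ffactS ffactn0 /bump /= ?/t; ring.
Qed.

Lemma binom_central_moment4_le m a :
  0 <= a <= 1 -> 1 <= m%:R * a * (1 - a) ->
  \sum_(k < m.+1) binom_pmf m a k * (k%:R - m%:R * a) ^+ 4
  <= 4 * (m%:R * a * (1 - a)) ^+ 2.
Proof.
case/andP=> a_ge0 a_le1; rewrite binom_central_moment4.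
have : 0 <= a * (1 - a) by rewrite mulr_ge0 ?subr_ge0.
set V := m%:R * a * (1 - a).
have -> : V * (1 + 3 * (m%:R - 2) * a * (1 - a)) = V + 3 * V ^+ 2 - 6 * V * (a * (1 - a)).
  by rewrite /V; ring.
nra.
Qed.

Lemma sum_binom_pmf_sqr_div m p q : 0 < p < 1 ->
  \sum_(k < m.+1) binom_pmf m q k ^+ 2 / binom_pmf m p k
  = (q ^+ 2 / p + (1 - q) ^+ 2 / (1 - p)) ^+ m.
Proof.
case/andP=> p_gt0 p_lt1.
have p_neq0 : p != 0 by rewrite gt_eqF.
have p1_neq0 : 1 - p != 0 by rewrite subr_eq0 eq_sym lt_eqF.
rewrite addrC exprDn; apply: eq_bigr => k _.
have C_neq0 : 'C(m, k)%:R != 0 :> R by rewrite pnatr_eq0 -lt0n bin_gt0 -ltnS.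
rewrite /binom_pmf -mulr_natl !expr_div_n (exprAC q) (exprAC (1 - q)).
by field; rewrite C_neq0 !expf_neq0.
Qed.

Lemma binom_chi2 m p q : 0 < p < 1 ->
  \sum_(k < m.+1) (binom_pmf m q k - binom_pmf m p k) ^+ 2 / binom_pmf m p k
  = (1 + (q - p) ^+ 2 / (p * (1 - p))) ^+ m - 1.
Proof.
move=> p01; have /andP[p_gt0 p_lt1] := p01.
have P_neq0 (k : 'I_m.+1) : binom_pmf m p k != 0.
  by rewrite gt_eqF // binom_pmf_gt0 // -ltnS.
transitivity (\sum_(k < m.+1) binom_pmf m q k ^+ 2 / binom_pmf m p k
  - 2 * \sum_(k < m.+1) binom_pmf m q k + \sum_(k < m.+1) binom_pmf m p k).
  rewrite mulr_sumr -sumrB -big_split /=; apply: eq_bigr => k _.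
  by field; rewrite P_neq0.
rewrite sum_binom_pmf_sqr_div // !sum_binom_pmf.
have -> : q ^+ 2 / p + (1 - q) ^+ 2 / (1 - p) = 1 + (q - p) ^+ 2 / (p * (1 - p)).
  by field; rewrite !gt_eqF ?subr_gt0.
ring.
Qed.

End BinomialMoments.

Definition l1_binom_sqdev (R : realType) (m : nat) (p q : R) : R :=
  \sum_(k < m.+1) `|binom_pmf m p k - binom_pmf m q k| * (k%:R - m%:R * p) ^+ 2.

Section BinomialShift.
Variables (R : realType) (m : nat) (p q : R).
Hypotheses (p01 : 0 < p < 1) (q01 : 0 <= q <= 1).

Local Notation P := (binom_pmf m p).
Local Notation Q := (binom_pmf m q).
Local Notation L := (l1_binom m p q).
Local Notation S := (l1_binom_sqdev m p q).
Local Notation V := (m%:R * p * (1 - p)).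
Local Notation d := (m%:R * (q - p)).
Local Notation a := ((q - p) ^+ 2 / (p * (1 - p))).

Let p_gt0 : 0 < p. Proof. by case/andP: p01. Qed.
Let p_lt1 : p < 1. Proof. by case/andP: p01. Qed.
Let p_in01 : 0 <= p <= 1. Proof. by rewrite ltW // ltW. Qed.

Lemma l1_binom_ge0 : 0 <= L.
Proof. exact: sumr_ge0. Qed.

Lemma l1_binom_sqdev_ge0 : 0 <= S.
Proof. by apply: sumr_ge0 => k _; rewrite mulr_ge0 ?sqr_ge0. Qed.

Lemma mean_shift_sum : d = \sum_(k < m.+1) (k%:R - m%:R * p) * (Q k - P k).
Proof.
transitivity (\sum_(k < m.+1) Q k * (k%:R - m%:R * p)
              - \sum_(k < m.+1) P k * (k%:R - m%:R * p)).
  by rewrite !binom_moment1; ring.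
by rewrite -sumrB; apply: eq_bigr => k _; ring.
Qed.

Lemma sqr_mean_shift_le : d ^+ 2 <= L * S.
Proof.
set w := fun k : 'I_m.+1 => `|P k - Q k|; set dev := fun k : 'I_m.+1 => `|k%:R - m%:R * p|.
have -> : L * S = (\sum_k w k * dev k ^+ 2) * (\sum_k w k * 1 ^+ 2).
  rewrite mulrC; congr (_ * _); apply: eq_bigr => k _.
    by rewrite real_normK ?num_real.
  by rewrite expr1n mulr1.
apply: le_trans (weighted_cauchy_schwarz dev (fun=> 1) (fun k => normr_ge0 _)).
rewrite -[d ^+ 2]real_normK ?num_real // lerXn2r ?nnegrE //.
  by apply: sumr_ge0 => k _; rewrite mulr1 mulr_ge0 ?normr_ge0.
rewrite mean_shift_sum; apply: le_trans (ler_norm_sum _ _ _) _.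
by apply: ler_sum => k _; rewrite mulr1 normrM mulrC distrC.
Qed.

Lemma l1_binom_sqdev_le : S <= V + m%:R * q * (1 - q) + d ^+ 2.
Proof.
have -> : V + m%:R * q * (1 - q) + d ^+ 2 =
          \sum_(k < m.+1) (P k + Q k) * (k%:R - m%:R * p) ^+ 2.
  under eq_bigr do rewrite mulrDl.
  by rewrite big_split /= !binom_moment2; ring.
apply: ler_sum => k _; rewrite ler_wpM2r ?sqr_ge0 //.
apply: le_trans (ler_normB _ _) _.
by rewrite !ger0_norm ?binom_pmf_ge0.
Qed.

Lemma sqr_l1_binom_sqdev_le :
  S ^+ 2 <= (\sum_(k < m.+1) P k * (k%:R - m%:R * p) ^+ 4) * ((1 + a) ^+ m - 1).
Proof.
have P_gt0 (k : 'I_m.+1) : 0 < P k by rewrite binom_pmf_gt0 // -ltnS.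
have := weighted_cauchy_schwarz (w := fun k : 'I_m.+1 => P k)
  (fun k => (k%:R - m%:R * p) ^+ 2) (fun k => `|P k - Q k| / P k)
  (fun k => ltW (P_gt0 k)).
rewrite -binom_chi2 //.
congr (_ ^+ 2 <= _ * _); apply: eq_bigr => k _.
- by field; rewrite gt_eqF.
- by rewrite -exprM.
- by rewrite distrC expr_div_n real_normK ?num_real //; field; rewrite gt_eqF.
Qed.

Lemma sqr_mean_shift : d ^+ 2 = V * (m%:R * a).
Proof. by field; rewrite !gt_eqF ?subr_gt0. Qed.

Hypothesis V_ge1 : 1 <= V.

Lemma l1_binom_small_shift : m%:R * a <= 1 / 2 -> m%:R * a <= 8 * L ^+ 2.
Proof.
move=> small.
have a_ge0 : 0 <= a by rewrite divr_ge0 ?sqr_ge0 ?mulr_ge0 ?subr_ge0 ?ltW.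
have chi_le := exprD1_subr1_le a_ge0 small.
have chi_ge0 : 0 <= (1 + a) ^+ m - 1 by rewrite subr_ge0 exprn_ege1 // lerDl.
have M4_le := binom_central_moment4_le p_in01 V_ge1.
have S2_le : S ^+ 2 <= 8 * V ^+ 2 * (m%:R * a).
  apply: le_trans sqr_l1_binom_sqdev_le _.
  have := sqr_ge0 V; nra.
have d4_le : (V * (m%:R * a)) ^+ 2 <= L ^+ 2 * S ^+ 2.
  rewrite -sqr_mean_shift -exprMn lerXn2r ?nnegrE ?sqr_ge0 ?mulr_ge0 //.
  - exact: l1_binom_ge0.
  - exact: l1_binom_sqdev_ge0.
  - exact: sqr_mean_shift_le.
have x_sq_le : (m%:R * a) ^+ 2 <= 8 * L ^+ 2 * (m%:R * a).
  have V2_gt0 : 0 < V ^+ 2 by rewrite exprn_gt0 // (lt_le_trans ltr01 V_ge1).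
  rewrite -(ler_pM2l V2_gt0) -exprMn; apply: le_trans d4_le _.
  have -> : V ^+ 2 * (8 * L ^+ 2 * (m%:R * a)) = L ^+ 2 * (8 * V ^+ 2 * (m%:R * a)).
    by ring.
  by rewrite ler_wpM2l ?sqr_ge0.
have := sqr_ge0 L; have : 0 <= m%:R * a by rewrite mulr_ge0.
nra.
Qed.

Lemma l1_binom_large_shift : 1 / 2 < m%:R * a -> 1 / 7 <= L.
Proof.
move=> large.
have d2_gt : V < 2 * d ^+ 2.
  rewrite sqr_mean_shift; have := V_ge1; move: large.
  set v := m%:R * p * (1 - p); set x := m%:R * a; nra.
have var_q : m%:R * q * (1 - q) = V + d * (1 - 2 * p) - d * (q - p) by ring.
have dqp_ge0 : 0 <= d * (q - p) by rewrite -mulrA mulr_ge0 // -expr2 sqr_ge0.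
have d12p_le : d * (1 - 2 * p) <= d ^+ 2 + 1 / 4.
  have := sqr_ge0 (d - (1 - 2 * p) / 2).
  have : (1 - 2 * p) ^+ 2 <= 1 by have := p_gt0; have := p_lt1; nra.
  set e := 1 - 2 * p; nra.
have S_le : S <= 7 * d ^+ 2.
  by have := V_ge1; have := l1_binom_sqdev_le; rewrite var_q; lra.
have := V_ge1; have := sqr_mean_shift_le; have := l1_binom_ge0; move: S_le d2_gt.
set D := d ^+ 2; set v := m%:R * p * (1 - p); nra.
Qed.

End BinomialShift.

Theorem lemma7 (R : realType) (c : R) (m : nat) (p : R) :
  2 < c -> (3 <= m)%N -> 0 <= p <= 1 -> p <= 1 / 2 -> c <= m%:R * p ->
  forall q : R, 0 <= q <= 1 ->
    l1_binom m p q >=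
      (1 / 350) * Num.min (Num.sqrt m%:R * `|p - q| / Num.sqrt (p * (1 - p))) 1.
Proof.
move=> c_gt2 _ /andP[p_ge0 _] p_le_half c_le q q01.
have p_gt0 : 0 < p by have := ler0n R m; nra.
have p_lt1 : p < 1 by lra.
have p01 : 0 < p < 1 by apply/andP.
have V_ge1 : 1 <= m%:R * p * (1 - p) by nra.
set r := Num.sqrt _ * _ / _.
have r_ge0 : 0 <= r by rewrite divr_ge0 ?mulr_ge0 ?sqrtr_ge0.
have r_sq : r ^+ 2 = m%:R * ((q - p) ^+ 2 / (p * (1 - p))).
  rewrite expr_div_n exprMn !sqr_sqrtr ?mulr_ge0 ?ler0n ?subr_ge0 ?ltW //.
  by rewrite real_normK ?num_real // -sqrrN opprB mulrA.
have L_ge0 := l1_binom_ge0 m p q; set L := l1_binom m p q in L_ge0 *.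
case: (leP (r ^+ 2) (1 / 2)) => [small | large].
- rewrite r_sq in small.
  have := l1_binom_small_shift p01 V_ge1 small; rewrite -r_sq -/L => r_le.
  have r_le3L : r <= 3 * L.
    rewrite -ler_sqr ?nnegrE //; last lra.
    by rewrite (_ : (3 * L) ^+ 2 = 9 * L ^+ 2); [nra | ring].
  suff : Num.min r 1 <= r by lra.
  by rewrite ge_min lexx.
- rewrite r_sq in large.
  have := l1_binom_large_shift p01 q01 V_ge1 large; rewrite -/L.
  suff : Num.min r 1 <= 1 by lra.
  by rewrite ge_min lexx orbT.
Qed.
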